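(* Assume the setting below (the iteration (a)–(c)), and assume that every Moore–Penrose pseudoinverse and every denominator occurring in the iteration is well defined, i.e. $\sum_{i=1}^n (W_{k})_{ij}>0$ for all $j$. Then each iteration does not increase the objective: $$L(V_{k+1},U_{k+1},\mu_{k+1})\le L(V_k,U_k,\mu_k)\qquad\text{for all }k\ge 0 .$$
   Context: Setting. Let $X=(x_{ij})$ be an $n\times p$ real matrix and $M=(m_{ij})\in\{0,1\}^{n\times p}$ a missingness indicator ($m_{ij}=0$ means $x_{ij}$ is missing; its numerical value is then arbitrary and irrelevant). Put $m_i=\sum_j m_{ij}$, assumed $\ge 1$ for every $i$, and $m=\sum_i m_i$. Fix constants $\hat\sigma_{1,j}>0$ ($j=1,\dots,p$), $\hat\sigma_2>0$ and an integer $1\le q<p$. For $0<b<c$ and $q_1,q_2>0$ with $q_1\tanh(q_2(c-b))=b$, let $d=b^2/2+(q_1/q_2)\ln\cosh(q_2(c-b))$ and define $\rho_{b,c}(z)=z^2/2$ if $|z|\le b$, $\rho_{b,c}(z)=d-(q_1/q_2)\ln\cosh(q_2(c-|z|))$ if $b\le|z|\le c$, $\rho_{b,c}(z)=d$ if $|z|\ge c$; its derivative is $\psi_{b,c}(z)=z$ for $|z|\le b$, $q_1\tanh(q_2(c-|z|))\,\mathrm{sign}(z)$ for $b\le |z|\le c$, $0$ for $|z|\ge c$. Let $\rho_1=\rho_{b_1,c_1}$ and $\rho_2=\rho_{b_2,c_2}$ be two such functions (each with its own admissible constants), $\psi_k=\rho_k'$, and weight functions $w_k(z)=\psi_k(z)/z$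 for $z\neq0$, $w_k(0)=1$. For $V\in\mathbb R^{p\times q}$ with rows $v_1^T,\dots,v_p^T$, $U\in\mathbb R^{n\times q}$ with rows $u_1^T,\dots,u_n^T$, and $\mu\in\mathbb R^p$, set $\hat x_{ij}=\mu_j+u_i^Tv_j$, $r_{ij}=x_{ij}-\hat x_{ij}$, $\mathrm{rt}_i=\sqrt{\frac1{m_i}\sum_j m_{ij}\hat\sigma_{1,j}^2\rho_1(r_{ij}/\hat\sigma_{1,j})}$ and the objective $$L(V,U,\mu)=\frac{\hat\sigma_2^2}{m}\sum_{i=1}^n m_i\,\rho_2(\mathrm{rt}_i/\hat\sigma_2).$$ Cellwise weights $w^c_{ij}=w_1(r_{ij}/\hat\sigma_{1,j})$, rowwise weights $w^r_i=w_2(\mathrm{rt}_i/\hat\sigma_2)$, and $W(V,U,\mu)=(w_{ij})$ with $w_{ij}=w^c_{ij}w^r_im_{ij}$; also $\widetilde W(V,U,\mu)=(w^c_{ij}m_{ij})$. For a nonnegative $n\times p$ matrix $W$ the weighted objective is $\widetilde L_W(V,U,\mu)=\sum_{i,j}w_{ij}(x_{ij}-\mu_j-u_i^Tv_j)^2$. For an $n\times p$ matrix $A$, $A^j$ denotes the $n\times n$ diagonal matrix with the $j$-th column of $A$ on the diagonal and $A_i$ the $p\times p$ diagonal matrix with the $i$-th row of $A$ on the diagonal; $x^j$ is the $j$-th column and $x_i$ the $i$-th row (as column vector) of $X$; ${}^\dagger$ is the Moore–Penrose inverse. Iteration. Start from any $(V_0,U_0,\mu_0)$. Given $(V_k,U_k,\mu_k)$,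 let $W_k=W(V_k,U_k,\mu_k)$, $\widetilde W_k=\widetilde W(V_k,U_k,\mu_k)$ and (a) for each $j$, the $j$-th row of $V_{k+1}$ is $\big(U_k^TW_k^jU_k\big)^\dagger U_k^TW_k^j\big(x^j-(\mu_k)_j1_n\big)$; (b) for each $i$, the $i$-th row of $U_{k+1}$ is $\big(V_{k+1}^T(\widetilde W_k)_iV_{k+1}\big)^\dagger V_{k+1}^T(\widetilde W_k)_i(x_i-\mu_k)$; (c) for each $j$, $(\mu_{k+1})_j=\dfrac{\sum_i (W_k)_{ij}\big(x_{ij}-(U_{k+1}V_{k+1}^T)_{ij}\big)}{\sum_i (W_k)_{ij}}$. *)

From HB Require Import structures.
From mathcomp Require Import all_boot all_order all_algebra.
From mathcomp Require Import all_classical all_reals all_analysis.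
Set Implicit Arguments. Unset Strict Implicit. Unset Printing Implicit Defensive.
Import Order.TTheory GRing.Theory Num.Theory.
Local Open Scope ring_scope.

Section Defs.
Variable R : realType.

Definition coshR (x : R) : R := (expR x + expR (- x)) / 2.
Definition tanhR (x : R) : R := (expR x - expR (- x)) / (expR x + expR (- x)).

Definition rho_admissible (b c q1 q2 : R) : Prop :=
  [/\ 0 < b, b < c, 0 < q1, 0 < q2 & q1 * tanhR (q2 * (c - b)) = b].

Definition rho_d (b c q1 q2 : R) : R :=
  b ^+ 2 / 2 + (q1 / q2) * ln (coshR (q2 * (c - b))).

Definition rho (b c q1 q2 : R) (z : R) : R :=
  if `|z| <= b then z ^+ 2 / 2
  else if `|z| <= c then rho_d b c q1 q2 - (q1 / q2) * ln (coshR (q2 * (c - `|z|)))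
  else rho_d b c q1 q2.

Definition psi (b c q1 q2 : R) (z : R) : R :=
  if `|z| <= b then z
  else if `|z| <= c then q1 * tanhR (q2 * (c - `|z|)) * Num.sg z
  else 0.

Definition wfun (b c q1 q2 : R) (z : R) : R :=
  if z == 0 then 1 else psi b c q1 q2 z / z.

(* Moore--Penrose inverse, characterized by the four Penrose conditions
   (which determine it uniquely). *)
Definition is_MP_inverse (k : nat) (A B : 'M[R]_k) : Prop :=
  [/\ A *m B *m A = A, B *m A *m B = B,
      (A *m B)^T = A *m B & (B *m A)^T = B *m A].

Variables (n p q : nat).
Variables (X : 'M[R]_(n, p)) (M : 'M[bool]_(n, p)).
Variables (sigma1 : 'I_p -> R) (sigma2 : R).
Variables (b1 c1 q11 q12 b2 c2 q21 q22 : R).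

Definition mij (i : 'I_n) (j : 'I_p) : R := (M i j)%:R.
Definition mrow (i : 'I_n) : R := \sum_j mij i j.
Definition mtot : R := \sum_i mrow i.

Definition xhat (V : 'M[R]_(p, q)) (U : 'M[R]_(n, q)) (mu : 'rV[R]_p) i j : R :=
  mu 0 j + (U *m V^T) i j.
Definition resid V U mu i j : R := X i j - xhat V U mu i j.

Definition rt V U mu (i : 'I_n) : R :=
  Num.sqrt ((mrow i)^-1 *
    \sum_j mij i j * sigma1 j ^+ 2 * rho b1 c1 q11 q12 (resid V U mu i j / sigma1 j)).

Definition objL V U mu : R :=
  sigma2 ^+ 2 / mtot *
    \sum_i mrow i * rho b2 c2 q21 q22 (rt V U mu i / sigma2).

Definition wcell V U mu i j : R := wfun b1 c1 q11 q12 (resid V U mu i j / sigma1 j).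
Definition wrow V U mu i : R := wfun b2 c2 q21 q22 (rt V U mu i / sigma2).

Definition Wmat V U mu : 'M[R]_(n, p) :=
  \matrix_(i, j) (wcell V U mu i j * wrow V U mu i * mij i j).
Definition Wtmat V U mu : 'M[R]_(n, p) :=
  \matrix_(i, j) (wcell V U mu i j * mij i j).

Definition iter_step (V : 'M[R]_(p, q)) (U : 'M[R]_(n, q)) (mu : 'rV[R]_p)
    (V' : 'M[R]_(p, q)) (U' : 'M[R]_(n, q)) (mu' : 'rV[R]_p) : Prop :=
  let W := Wmat V U mu in
  let Wt := Wtmat V U mu in
  [/\
      forall j : 'I_p,
        let Wj : 'M[R]_n := diag_mx (\row_i W i j) in
        exists B : 'M[R]_q,
          is_MP_inverse (U^T *m Wj *m U) B /\
          (row j V')^T = B *m (U^T *m Wj *m (\col_i (X i j - mu 0 j))),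
      forall i : 'I_n,
        let Wi : 'M[R]_p := diag_mx (\row_j Wt i j) in
        exists B : 'M[R]_q,
          is_MP_inverse (V'^T *m Wi *m V') B /\
          (row i U')^T = B *m (V'^T *m Wi *m (\col_j (X i j - mu 0 j)))
    &
      forall j : 'I_p,
        mu' 0 j = (\sum_i W i j * (X i j - (U' *m V'^T) i j)) / (\sum_i W i j)].

End Defs.

From HB Require Import structures.
From mathcomp Require Import all_boot all_order all_algebra.
From mathcomp Require Import all_classical all_reals all_analysis.
From mathcomp Require Import ring lra.
Import Order.TTheory GRing.Theory Num.Theory.
Local Open Scope ring_scope.
Set Implicit Arguments. Unset Strict Implicit. Unset Printing Implicit Defensive.

(* Each [rho_{b,c}] is a concave function of [z^2] with slope [w(z)/2]:
   [rho z' <= rho z + w z / 2 * (z'^2 - z^2)].  For [|z|] in [(b, c)] this is the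
   convexity of [ln cosh]; the admissibility condition [q1 tanh(q2 (c - b)) = b]
   glues the pieces.  Applied cellwise to [rho_1] and then rowwise to [rho_2], it
   shows that [L(theta') <= L(theta) + (L~_W(theta') - L~_W(theta)) / (4 m)] with
   [W = W(theta)] frozen.  Each of the steps (a)-(c) minimizes [L~_W] exactly in
   one block of variables: a weighted least-squares problem solved by a
   generalized inverse of its normal equations (for (b) with weights [W~], which
   differ from [W] by a nonnegative row factor), resp. a weighted mean.  Hence
   [L~_W] does not increase along a step, and neither does [L]. *)

Section LnCosh.
Variable R : realType.
Implicit Types x y m : R.

Lemma coshR_gt0 x : 0 < coshR x.
Proof. by rewrite /coshR divr_gt0 // addr_gt0 // expR_gt0. Qed.

Lemma expR_ge_tangent m x : expR m * (1 + (x - m)) <= expR x.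
Proof.
have -> : expR x = expR m * expR (x - m) by rewrite -expRD; congr expR; ring.
by rewrite ler_pM2l ?expR_gt0 // expR_ge1Dx.
Qed.

(* Both exponentials in [coshR x] are bounded below by their tangents at [m];
   for this choice of [m] the two linear terms cancel. *)
Lemma coshR_ge_tangent x y : coshR y * expR (tanhR y * (x - y)) <= coshR x.
Proof.
set E := expR y; set e := expR (- y); set m := tanhR y * (x - y).
have hE : 0 < E by exact: expR_gt0.
have he : 0 < e by exact: expR_gt0.
have hmE : m * (E + e) = (x - y) * (E - e).
  by rewrite /m /tanhR -/E -/e; field; rewrite gt_eqF ?addr_gt0.
have h1 := expR_ge_tangent m (x - y).
have h2 := expR_ge_tangent m (- (x - y)).
have -> : coshR x = (E * expR (x - y) + e * expR (- (x - y))) / 2.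
  by rewrite /coshR /E /e -!expRD; congr ((expR _ + expR _) / 2); ring.
rewrite /coshR -/E -/e mulrAC ler_pM2r ?invr_gt0 // mulrC.
have key : E * (expR m * (1 + (x - y - m))) + e * (expR m * (1 + (- (x - y) - m)))
    = expR m * (E + e) + expR m * ((x - y) * (E - e) - m * (E + e)) by ring.
rewrite hmE subrr mulr0 addr0 in key.
by rewrite -key lerD // ler_pM2l.
Qed.

Lemma ln_coshR_ge_tangent x y : ln (coshR y) + tanhR y * (x - y) <= ln (coshR x).
Proof.
have hx := coshR_gt0 x; have hy := coshR_gt0 y.
have hm : 0 < coshR y * expR (tanhR y * (x - y)) by rewrite mulr_gt0 ?expR_gt0.
have h := coshR_ge_tangent x y.
by rewrite -ler_ln ?posrE // lnM ?posrE ?expR_gt0 // expRK in h.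
Qed.

Lemma tanhR_ge0 x : 0 <= x -> 0 <= tanhR x.
Proof.
move=> hx; rewrite /tanhR divr_ge0 //.
by rewrite subr_ge0 ler_expR; lra.
Qed.

Lemma ler_tanhR x y : x <= y -> tanhR x <= tanhR y.
Proof.
move=> hxy; rewrite /tanhR.
have h1 := expR_gt0 x; have h2 := expR_gt0 (- x).
have h3 := expR_gt0 y; have h4 := expR_gt0 (- y).
rewrite ler_pdivrMr ?addr_gt0 // mulrAC ler_pdivlMr ?addr_gt0 //.
have : expR x * expR (- y) <= expR y * expR (- x) by rewrite -!expRD ler_expR; lra.
nra.
Qed.

End LnCosh.

Section RhoMajorant.
Variable R : realType.
Variables (b c q1 q2 : R).
Hypothesis adm : rho_admissible b c q1 q2.

Let T (u : R) := tanhR (q2 * (c - u)).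
Let F (u : R) := q1 / q2 * ln (coshR (q2 * (c - u))).

Let b_gt0 : 0 < b. Proof. by case: adm. Qed.
Let b_lt_c : b < c. Proof. by case: adm. Qed.
Let q1_gt0 : 0 < q1. Proof. by case: adm. Qed.
Let q2_gt0 : 0 < q2. Proof. by case: adm. Qed.

(* [F] is convex with derivative [- q1 * T]. *)
Let F_ge_tangent u v : F u + q1 * T u * (u - v) <= F v.
Proof.
have := ln_coshR_ge_tangent (q2 * (c - v)) (q2 * (c - u)).
rewrite -(ler_pM2l (divr_gt0 q1_gt0 q2_gt0)) /F /T.
set Lu := ln _; set th := tanhR _.
have -> : q1 / q2 * (Lu + th * (q2 * (c - v) - q2 * (c - u)))
          = q1 / q2 * Lu + q1 * th * (u - v) by field; rewrite (gt_eqF q2_gt0).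
by [].
Qed.

Let T_c : T c = 0.
Proof. by rewrite /T /tanhR subrr mulr0 oppr0 subrr mul0r. Qed.

Let F_c : F c = 0.
Proof. by rewrite /F subrr mulr0 /coshR oppr0 expR0 divff ?ln1 ?mulr0. Qed.

Let qT_b : q1 * T b = b.
Proof. by case: adm. Qed.

Let T_ge0 u : u <= c -> 0 <= T u.
Proof. by move=> hu; apply/tanhR_ge0/mulr_ge0; rewrite ?subr_ge0 // ltW. Qed.

Let T_le_T_b u : b <= u -> T u <= T b.
Proof. by move=> hu; apply: ler_tanhR; rewrite (ler_pM2l q2_gt0) lerD2l lerN2. Qed.

Let F_ge0 v : 0 <= F v.
Proof. by have := F_ge_tangent c v; rewrite F_c T_c mulr0 mul0r addr0. Qed.

Lemma rho_small z : `|z| <= b -> rho b c q1 q2 z = z ^+ 2 / 2.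
Proof. by rewrite /rho => ->. Qed.

Lemma rho_mid z : b < `|z| <= c -> rho b c q1 q2 z = rho_d b c q1 q2 - F `|z|.
Proof. by case/andP; rewrite /rho => /lt_geF -> ->. Qed.

Lemma rho_large z : c < `|z| -> rho b c q1 q2 z = rho_d b c q1 q2.
Proof.
by move=> hz; rewrite /rho !lt_geF // (lt_trans b_lt_c hz).
Qed.

Lemma wfun_small z : `|z| <= b -> wfun b c q1 q2 z = 1.
Proof.
move=> hz; rewrite /wfun /psi hz; case: eqP => // /eqP z0; exact: divff.
Qed.

Lemma wfun_mid z : b < `|z| <= c -> wfun b c q1 q2 z = q1 * T `|z| / `|z|.
Proof.
case/andP=> hbz hzc; have z0 : z != 0 by rewrite -normr_gt0 (lt_trans b_gt0 hbz).
rewrite /wfun /psi (negbTE z0) lt_geF // hzc -/(T _) -mulrA; congr (_ * _).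
apply: (mulIf z0); rewrite divfK // [X in _ = _ * X]numEsg mulrCA mulVf ?mulr1 //.
by rewrite normr_eq0.
Qed.

Lemma wfun_large z : c < `|z| -> wfun b c q1 q2 z = 0.
Proof.
move=> hz; have z0 : z != 0 by rewrite -normr_gt0 (lt_trans (lt_trans b_gt0 b_lt_c) hz).
by rewrite /wfun /psi (negbTE z0) !lt_geF ?mul0r // (lt_trans b_lt_c hz).
Qed.

Let normK (z : R) : `|z| ^+ 2 = z ^+ 2. Proof. exact/real_normK/num_real. Qed.

Lemma rho_le_half_sqr z : rho b c q1 q2 z <= z ^+ 2 / 2.
Proof.
rewrite -normK; set t := `|z|; have ht : 0 <= t := normr_ge0 z.
have [htb|hbt] := lerP t b; first by rewrite rho_small // -normK.
have hFb := F_ge_tangent b t; rewrite qT_b in hFb.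
have [htc|hct] := lerP t c.
  rewrite rho_mid ?hbt ?htc //= /rho_d -/(F b).
  have : 0 <= (t - b) ^+ 2 := sqr_ge0 _.
  nra.
have hFc := F_ge_tangent b c; rewrite qT_b F_c in hFc.
rewrite rho_large // /rho_d -/(F b).
have : 0 <= (c - b) ^+ 2 := sqr_ge0 _.
have := b_lt_c; have := b_gt0.
nra.
Qed.

Lemma rho_le_rho_d z : rho b c q1 q2 z <= rho_d b c q1 q2.
Proof.
have hFb := F_ge0 b.
have [hzb|hbz] := lerP `|z| b.
  rewrite rho_small // /rho_d -/(F b) -normK.
  have : `|z| ^+ 2 <= b ^+ 2 by rewrite ler_sqr ?nnegrE ?(ltW b_gt0).
  lra.
have [hzc|hcz] := lerP `|z| c; last by rewrite rho_large.
by rewrite rho_mid ?hbz ?hzc // gerBl F_ge0.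
Qed.

(* On the middle range the weight is [k = q1 * T s / s], and [k <= 1] because
   [q1 * T s <= q1 * T b = b < s]. *)
Lemma rho_majorant_mid s t : b < s <= c -> 0 <= t ->
  rho b c q1 q2 t <= rho_d b c q1 q2 - F s + q1 * T s / s / 2 * (t ^+ 2 - s ^+ 2).
Proof.
case/andP=> hbs hsc ht; have hs : 0 < s := lt_trans b_gt0 hbs.
set k := q1 * T s / s.
have hks : k * s = q1 * T s by rewrite /k divfK // gt_eqF.
have hk0 : 0 <= k by apply/divr_ge0/ltW/hs/mulr_ge0/T_ge0/hsc/ltW.
have [htb|hbt] := lerP t b.
  have hk1 : k <= 1.
    rewrite /k ler_pdivrMr // mul1r.
    have : q1 * T s <= q1 * T b by rewrite ler_pM2l ?T_le_T_b ?(ltW hbs).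
    rewrite qT_b; lra.
  have hF := F_ge_tangent s b; rewrite -hks in hF.
  have e1 : 0 <= k * (b - s) ^+ 2 by rewrite mulr_ge0 ?sqr_ge0.
  have e2 : 0 <= (1 - k) * (b ^+ 2 - t ^+ 2).
    by rewrite mulr_ge0 ?subr_ge0 // ler_sqr ?nnegrE ?(ltW b_gt0).
  rewrite rho_small ?ger0_norm // /rho_d -/(F b); lra.
have [htc|hct] := lerP t c.
  have hF := F_ge_tangent s t; rewrite -hks in hF.
  have e1 : 0 <= k * (t - s) ^+ 2 by rewrite mulr_ge0 ?sqr_ge0.
  rewrite rho_mid ger0_norm ?hbt ?htc //; lra.
have hF := F_ge_tangent s c; rewrite -hks F_c in hF.
have e1 : 0 <= k * (t - s) ^+ 2 by rewrite mulr_ge0 ?sqr_ge0.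
have e2 : 0 <= k * s * (t - c).
  by apply: mulr_ge0; [exact: mulr_ge0 hk0 (ltW hs) | rewrite subr_ge0 ltW].
rewrite rho_large ?ger0_norm //; lra.
Qed.

Lemma rho_majorant z z' :
  rho b c q1 q2 z' <= rho b c q1 q2 z + wfun b c q1 q2 z / 2 * (z' ^+ 2 - z ^+ 2).
Proof.
have [hzb|hbz] := lerP `|z| b.
  rewrite (rho_small hzb) (wfun_small hzb) mul1r; have := rho_le_half_sqr z'; lra.
have [hzc|hcz] := lerP `|z| c; last first.
  by rewrite (rho_large hcz) (wfun_large hcz) mul0r mul0r addr0 rho_le_rho_d.
have -> : rho b c q1 q2 z' = rho b c q1 q2 `|z'| by rewrite /rho normr_id normK.
have hz : b < `|z| <= c by rewrite hbz hzc.
rewrite (rho_mid hz) (wfun_mid hz) -[z ^+ 2]normK -[z' ^+ 2]normK.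
exact: rho_majorant_mid.
Qed.

Lemma wfun_ge0 z : 0 <= wfun b c q1 q2 z.
Proof.
have [hzb|hbz] := lerP `|z| b; first by rewrite (wfun_small hzb).
have [hzc|hcz] := lerP `|z| c; last by rewrite (wfun_large hcz).
have hz : b < `|z| <= c by rewrite hbz hzc.
by rewrite (wfun_mid hz); apply/divr_ge0/normr_ge0/mulr_ge0/T_ge0/hzc/ltW.
Qed.

Lemma rho_ge0 z : 0 <= rho b c q1 q2 z.
Proof.
have := rho_majorant z 0.
rewrite (@rho_small 0) ?normr0 ?(ltW b_gt0) // expr0n /= mul0r sub0r.
have : 0 <= wfun b c q1 q2 z / 2 * z ^+ 2 by apply/mulr_ge0/sqr_ge0/divr_ge0/ler0n/wfun_ge0.
lra.
Qed.

End RhoMajorant.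

Section WeightedLeastSquares.
Variable R : realType.
Variables (m k : nat) (G : 'M[R]_(m, k)) (w : 'I_m -> R).
Hypothesis w_ge0 : forall i, 0 <= w i.

Let D : 'M[R]_m := diag_mx (\row_i w i).

Lemma diag_quadratic_form r (K : 'M[R]_(r, m)) a :
  (K *m D *m K^T) a a = \sum_i w i * K a i ^+ 2.
Proof. by rewrite mul_mx_diag !mxE; apply: eq_bigr => i _; rewrite !mxE; ring. Qed.

Lemma diag_quadratic_form_eq0 r (K : 'M[R]_(r, m)) :
  K *m D *m K^T = 0 -> forall a i, w i * K a i = 0.
Proof.
move=> K0 a i; have := diag_quadratic_form K a; rewrite K0 mxE => /esym.
have hnn j : true -> 0 <= w j * K a j ^+ 2 by rewrite mulr_ge0 ?sqr_ge0.
move/(psumr_eq0P hnn)/(_ i isT) => h.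
apply/eqP; rewrite -sqrf_eq0 exprMn; apply/eqP.
by rewrite expr2 -mulrA h mulr0.
Qed.

(* With [P = 1 - A B] and [A = G^T D G] we get [P A P^T = 0], i.e. [D G P^T = 0],
   so [P] also kills [G^T D y]. *)
Lemma wgram_ginv_normal_eq (B : 'M[R]_k) (y : 'cV[R]_m) :
  G^T *m D *m G *m B *m (G^T *m D *m G) = G^T *m D *m G ->
  G^T *m D *m G *m B *m (G^T *m D *m y) = G^T *m D *m y.
Proof.
set A := G^T *m D *m G => ABA; set P : 'M[R]_k := 1%:M - A *m B.
have PA0 : P *m A = 0 by rewrite mulmxBl mul1mx ABA subrr.
have PG0 := diag_quadratic_form_eq0 (K := P *m G^T).
have /PG0 wPG : P *m G^T *m D *m (P *m G^T)^T = 0.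
  have -> : P *m G^T *m D *m (P *m G^T)^T = P *m A *m P^T.
    by rewrite /A trmx_mul trmxK !mulmxA.
  by rewrite PA0 mul0mx.
have Pc0 : P *m (G^T *m D *m y) = 0.
  apply/matrixP => a j; rewrite !mulmxA mul_mx_diag mxE [in RHS]mxE big1 // => i _.
  by rewrite mxE [(\row__ _) 0 _]mxE [(P *m G^T) a i * _]mulrC wPG mul0r.
by move/eqP: Pc0; rewrite mulmxBl mul1mx subr_eq0 mulmxA => /eqP <-.
Qed.

Lemma wlsq_ginv_min (B : 'M[R]_k) (y : 'I_m -> R) (v : 'cV[R]_k) :
  G^T *m D *m G *m B *m (G^T *m D *m G) = G^T *m D *m G ->
  \sum_i w i * (y i - (G *m (B *m (G^T *m D *m \col_i y i))) i 0) ^+ 2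
  <= \sum_i w i * (y i - (G *m v) i 0) ^+ 2.
Proof.
move=> ABA; set ycol := \col_i y i; set vs := B *m (G^T *m D *m ycol).
have normal : G^T *m D *m (ycol - G *m vs) = 0.
  rewrite mulmxBr; have -> : G^T *m D *m (G *m vs) = G^T *m D *m G *m B *m (G^T *m D *m ycol).
    by rewrite /vs !mulmxA.
  by rewrite wgram_ginv_normal_eq ?subrr.
set g := G *m (v - vs).
have cross : \sum_i w i * g i 0 * (y i - (G *m vs) i 0) = 0.
  have : ((v - vs)^T *m (G^T *m D *m (ycol - G *m vs))) 0 0 = 0.
    by rewrite normal mulmx0 mxE.
  rewrite !mulmxA -trmx_mul -/g mul_mx_diag mxE => h.
  by apply: etrans h; apply: eq_bigr => i _; rewrite !mxE; ring.
have split_sq : \sum_i w i * (y i - (G *m v) i 0) ^+ 2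
    = \sum_i w i * (y i - (G *m vs) i 0) ^+ 2 + \sum_i w i * g i 0 ^+ 2
      - 2 * \sum_i w i * g i 0 * (y i - (G *m vs) i 0).
  rewrite mulr_sumr -big_split -sumrB /=; apply: eq_bigr => i _.
  by rewrite /g mulmxBr !mxE; ring.
rewrite split_sq cross mulr0 subr0 lerDl.
by apply: sumr_ge0 => i _; rewrite mulr_ge0 ?sqr_ge0.
Qed.

End WeightedLeastSquares.

Lemma weighted_mean_min (R : realType) (I : finType) (w a : I -> R) (mu : R) :
  (forall i, 0 <= w i) -> 0 < \sum_i w i ->
  \sum_i w i * (a i - (\sum_i w i * a i) / (\sum_i w i)) ^+ 2
  <= \sum_i w i * (a i - mu) ^+ 2.
Proof.
move=> hw hS; set S := \sum_i w i; set mean := (\sum_i w i * a i) / S.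
have Sa : \sum_i w i * a i = mean * S by rewrite /mean divfK // gt_eqF.
rewrite -subr_ge0 -sumrB.
have -> : \sum_i (w i * (a i - mu) ^+ 2 - w i * (a i - mean) ^+ 2) =
    \sum_i (2 * (mean - mu) * (w i * a i) + (mu ^+ 2 - mean ^+ 2) * w i).
  by apply: eq_bigr => i _; ring.
rewrite big_split /= -!mulr_sumr Sa.
have -> : 2 * (mean - mu) * (mean * S) + (mu ^+ 2 - mean ^+ 2) * S
    = S * (mean - mu) ^+ 2 by ring.
by rewrite mulr_ge0 ?sqr_ge0 ?ltW.
Qed.

Section Objective.
Variable R : realType.
Variables (n p q : nat) (X : 'M[R]_(n, p)) (M : 'M[bool]_(n, p)).
Variables (sigma1 : 'I_p -> R) (sigma2 : R) (b1 c1 q11 q12 b2 c2 q21 q22 : R).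
Hypothesis M_row : forall i : 'I_n, (1 <= \sum_(j < p) M i j)%N.
Hypothesis sigma1_gt0 : forall j, 0 < sigma1 j.
Hypothesis sigma2_gt0 : 0 < sigma2.
Hypothesis adm1 : rho_admissible b1 c1 q11 q12.
Hypothesis adm2 : rho_admissible b2 c2 q21 q22.
Implicit Types (V : 'M[R]_(p, q)) (U : 'M[R]_(n, q)) (mu : 'rV[R]_p).

Local Notation mij := (mij R M).
Local Notation mrow := (mrow R M).
Local Notation resid := (resid X).
Local Notation W := (Wmat X M sigma1 sigma2 b1 c1 q11 q12 b2 c2 q21 q22).
Local Notation Wt := (Wtmat X M sigma1 b1 c1 q11 q12).
Local Notation wrow := (wrow X M sigma1 sigma2 b1 c1 q11 q12 b2 c2 q21 q22).
Local Notation rt := (rt X M sigma1 b1 c1 q11 q12).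
Local Notation L := (objL X M sigma1 sigma2 b1 c1 q11 q12 b2 c2 q21 q22).

Definition wobjL (Wc : 'M[R]_(n, p)) V U mu : R :=
  \sum_i \sum_j Wc i j * resid V U mu i j ^+ 2.

Lemma mij_ge0 i j : 0 <= mij i j.
Proof. by rewrite /mij ler0n. Qed.

Lemma mrow_gt0 i : 0 < mrow i.
Proof. by rewrite /mrow /mij -natr_sum ltr0n M_row. Qed.

Lemma Wmat_rowE V U mu i j : W V U mu i j = wrow V U mu i * Wt V U mu i j.
Proof. by rewrite !mxE; ring. Qed.

Lemma Wtmat_ge0 V U mu i j : 0 <= Wt V U mu i j.
Proof. by rewrite mxE mulr_ge0 ?mij_ge0 // (wfun_ge0 adm1). Qed.

Lemma Wmat_ge0 V U mu i j : 0 <= W V U mu i j.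
Proof. by rewrite Wmat_rowE mulr_ge0 ?Wtmat_ge0 // (wfun_ge0 adm2). Qed.

Lemma residE V U mu i j : resid V U mu i j = X i j - mu 0 j - (U *m V^T) i j.
Proof. by rewrite /resid /xhat opprD addrA. Qed.

Lemma mulmx_row_trE V U i j : (U *m (row j V)^T) i 0 = (U *m V^T) i j.
Proof. by rewrite !mxE; apply: eq_bigr => a _; rewrite !mxE. Qed.

Lemma mulmx_row_trE' V U i j : (V *m (row i U)^T) j 0 = (U *m V^T) i j.
Proof. by rewrite !mxE; apply: eq_bigr => a _; rewrite !mxE mulrC. Qed.

Local Notation step := (iter_step X M sigma1 sigma2 b1 c1 q11 q12 b2 c2 q21 q22).

Lemma step_V_wobjL_le V U mu V' U' mu' : step V U mu V' U' mu' ->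
  wobjL (W V U mu) V' U mu <= wobjL (W V U mu) V U mu.
Proof.
case=> stepV _ _; rewrite /wobjL exchange_big [in leRHS]exchange_big /=.
apply: ler_sum => j _; have [B [[ABA _ _ _] rowV']] := stepV j.
have := wlsq_ginv_min (fun i => Wmat_ge0 V U mu i j) (fun i => X i j - mu 0 j)
  (row j V)^T ABA.
suff sumE V2 : \sum_i W V U mu i j * resid V2 U mu i j ^+ 2
    = \sum_i W V U mu i j * (X i j - mu 0 j - (U *m (row j V2)^T) i 0) ^+ 2.
  by rewrite !sumE rowV'.
by apply: eq_bigr => i _; rewrite residE mulmx_row_trE.
Qed.

Lemma step_U_wobjL_le V U mu V' U' mu' : step V U mu V' U' mu' ->
  wobjL (W V U mu) V' U' mu <= wobjL (W V U mu) V' U mu.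
Proof.
case=> _ stepU _; apply: ler_sum => i _; have [B [[ABA _ _ _] rowU']] := stepU i.
suff sumE U2 : \sum_j W V U mu i j * resid V' U2 mu i j ^+ 2 = wrow V U mu i *
    \sum_j Wt V U mu i j * (X i j - mu 0 j - (V' *m (row i U2)^T) j 0) ^+ 2.
  rewrite !sumE rowU' ler_wpM2l ?(wfun_ge0 adm2) //.
  exact: (wlsq_ginv_min (Wtmat_ge0 V U mu i) (fun j => X i j - mu 0 j) _ ABA).
rewrite mulr_sumr; apply: eq_bigr => j _.
by rewrite Wmat_rowE residE mulmx_row_trE' mulrA.
Qed.

Lemma step_mu_wobjL_le V U mu V' U' mu' : step V U mu V' U' mu' ->
  (forall j, 0 < \sum_i W V U mu i j) ->
  wobjL (W V U mu) V' U' mu' <= wobjL (W V U mu) V' U' mu.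
Proof.
case=> _ _ step_mu W_pos; rewrite /wobjL exchange_big [in leRHS]exchange_big /=.
apply: ler_sum => j _.
have := weighted_mean_min (fun i => X i j - (U' *m V'^T) i j) (mu 0 j)
  (fun i => Wmat_ge0 V U mu i j) (W_pos j).
rewrite -step_mu.
suff sumE nu : \sum_i W V U mu i j * resid V' U' nu i j ^+ 2
    = \sum_i W V U mu i j * (X i j - (U' *m V'^T) i j - nu 0 j) ^+ 2 by rewrite !sumE.
by apply: eq_bigr => i _; rewrite residE; congr (_ * (_ ^+ 2)); ring.
Qed.

Let rhosum V U mu i :=
  \sum_j mij i j * sigma1 j ^+ 2 * rho b1 c1 q11 q12 (resid V U mu i j / sigma1 j).

Lemma rt_sqr V U mu i :
  (rt V U mu i / sigma2) ^+ 2 = (mrow i)^-1 * rhosum V U mu i / sigma2 ^+ 2.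
Proof.
rewrite expr_div_n sqr_sqrtr // mulr_ge0 ?invr_ge0 ?(ltW (mrow_gt0 i)) //.
rewrite /rhosum; apply: sumr_ge0 => j _.
exact/mulr_ge0/(rho_ge0 adm1)/mulr_ge0/sqr_ge0/mij_ge0.
Qed.

Lemma rhosum_majorant V U mu V2 U2 mu2 i :
  rhosum V2 U2 mu2 i <= rhosum V U mu i
    + \sum_j Wt V U mu i j / 2 * (resid V2 U2 mu2 i j ^+ 2 - resid V U mu i j ^+ 2).
Proof.
rewrite -big_split; apply: ler_sum => j _ /=.
have s1 : sigma1 j != 0 by rewrite gt_eqF.
have cj : 0 <= mij i j * sigma1 j ^+ 2 by rewrite mulr_ge0 ?mij_ge0 ?sqr_ge0.
set r := resid V U mu i j; set r2 := resid V2 U2 mu2 i j.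
have -> : mij i j * sigma1 j ^+ 2 * rho b1 c1 q11 q12 (r / sigma1 j)
    + Wt V U mu i j / 2 * (r2 ^+ 2 - r ^+ 2)
  = mij i j * sigma1 j ^+ 2 * (rho b1 c1 q11 q12 (r / sigma1 j)
    + wfun b1 c1 q11 q12 (r / sigma1 j) / 2 * ((r2 / sigma1 j) ^+ 2 - (r / sigma1 j) ^+ 2)).
  by rewrite mxE /wcell -/r; field.
exact/ler_wpM2l/rho_majorant.
Qed.

Lemma row_majorant V U mu V2 U2 mu2 i :
  mrow i * rho b2 c2 q21 q22 (rt V2 U2 mu2 i / sigma2)
  <= mrow i * rho b2 c2 q21 q22 (rt V U mu i / sigma2)
     + (4 * sigma2 ^+ 2)^-1 * \sum_j (W V U mu i j * resid V2 U2 mu2 i j ^+ 2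
                                     - W V U mu i j * resid V U mu i j ^+ 2).
Proof.
have m_gt0 := mrow_gt0 i; have s2 : sigma2 != 0 by rewrite gt_eqF.
have w_ge0 : 0 <= wrow V U mu i := wfun_ge0 adm2 _.
pose S := \sum_j Wt V U mu i j / 2 *
  (resid V2 U2 mu2 i j ^+ 2 - resid V U mu i j ^+ 2).
have sumE : \sum_j (W V U mu i j * resid V2 U2 mu2 i j ^+ 2
    - W V U mu i j * resid V U mu i j ^+ 2) = 2 * wrow V U mu i * S.
  by rewrite /S mulr_sumr; apply: eq_bigr => j _; rewrite Wmat_rowE; field.
have h : mrow i * rho b2 c2 q21 q22 (rt V2 U2 mu2 i / sigma2)
    <= mrow i * (rho b2 c2 q21 q22 (rt V U mu i / sigma2) + wrow V U mu i / 2 *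
         ((rt V2 U2 mu2 i / sigma2) ^+ 2 - (rt V U mu i / sigma2) ^+ 2)).
  exact/ler_wpM2l/rho_majorant/adm2/ltW.
rewrite sumE; apply: le_trans h _; rewrite mulrDr lerD2l.
(* Rewriting with [rt_sqr] in place would make the unifier unfold [rt] while
   comparing the two square roots; abstracting them first avoids this. *)
move: (rt_sqr V2 U2 mu2 i) (rt_sqr V U mu i).
generalize (rt V2 U2 mu2 i / sigma2) (rt V U mu i / sigma2) => x2 x -> ->.
move: (rhosum_majorant V U mu V2 U2 mu2 i) w_ge0; rewrite -/S.
generalize (rhosum V2 U2 mu2 i) (rhosum V U mu i) (wrow V U mu i) => A2 A w hA w_ge0.
have -> : mrow i * (w / 2 * ((mrow i)^-1 * A2 / sigma2 ^+ 2 - (mrow i)^-1 * A / sigma2 ^+ 2))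
    = w / (2 * sigma2 ^+ 2) * (A2 - A) by field; rewrite s2 gt_eqF.
have -> : (4 * sigma2 ^+ 2)^-1 * (2 * w * S) = w / (2 * sigma2 ^+ 2) * S by field.
by apply: ler_wpM2l; rewrite ?lerBlDl // divr_ge0 // mulr_ge0 // sqr_ge0.
Qed.

Lemma objL_majorant V U mu V2 U2 mu2 :
  L V2 U2 mu2 <= L V U mu
    + (4 * mtot R M)^-1 * (wobjL (W V U mu) V2 U2 mu2 - wobjL (W V U mu) V U mu).
Proof.
have hsum : \sum_i mrow i * rho b2 c2 q21 q22 (rt V2 U2 mu2 i / sigma2)
    <= \sum_i mrow i * rho b2 c2 q21 q22 (rt V U mu i / sigma2)
       + (4 * sigma2 ^+ 2)^-1 * (wobjL (W V U mu) V2 U2 mu2 - wobjL (W V U mu) V U mu).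
  rewrite /wobjL -sumrB mulr_sumr -big_split /=; apply: ler_sum => i _.
  by rewrite -sumrB; exact: row_majorant.
have c_ge0 : 0 <= sigma2 ^+ 2 / mtot R M.
  by rewrite divr_ge0 ?sqr_ge0 // sumr_ge0 // => i _; rewrite ltW ?mrow_gt0.
apply: le_trans (ler_wpM2l c_ge0 hsum) _.
have c_eq : sigma2 ^+ 2 / mtot R M * (4 * sigma2 ^+ 2)^-1 = (4 * mtot R M)^-1.
  by rewrite !invfM; move: (mtot R M)^-1 => t; field; rewrite gt_eqF.
by rewrite mulrDr lerD2l mulrA c_eq.
Qed.

Lemma step_objL_le V U mu V' U' mu' : step V U mu V' U' mu' ->
  (forall j, 0 < \sum_i W V U mu i j) -> L V' U' mu' <= L V U mu.
Proof.
move=> st W_pos; apply: le_trans (objL_majorant V U mu V' U' mu') _.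
rewrite gerDl mulr_ge0_le0 ?invr_ge0 ?mulr_ge0 ?sumr_ge0 // => [i _|].
  by rewrite ltW ?mrow_gt0.
rewrite subr_le0 (le_trans (step_mu_wobjL_le st W_pos)) //.
exact: le_trans (step_U_wobjL_le st) (step_V_wobjL_le st).
Qed.

End Objective.

Theorem proposition1 (R : realType) (n p q : nat)
  (X : 'M[R]_(n, p)) (M : 'M[bool]_(n, p))
  (sigma1 : 'I_p -> R) (sigma2 : R)
  (b1 c1 q11 q12 b2 c2 q21 q22 : R)
  (Vs : nat -> 'M[R]_(p, q)) (Us : nat -> 'M[R]_(n, q)) (mus : nat -> 'rV[R]_p) :
  (forall i : 'I_n, (1 <= \sum_(j < p) M i j)%N) ->
  (forall j, 0 < sigma1 j) -> 0 < sigma2 ->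
  (1 <= q)%N -> (q < p)%N ->
  rho_admissible b1 c1 q11 q12 -> rho_admissible b2 c2 q21 q22 ->
  (forall k, iter_step X M sigma1 sigma2 b1 c1 q11 q12 b2 c2 q21 q22
               (Vs k) (Us k) (mus k) (Vs k.+1) (Us k.+1) (mus k.+1)) ->
  (forall k (j : 'I_p),
     0 < \sum_(i < n) Wmat X M sigma1 sigma2 b1 c1 q11 q12 b2 c2 q21 q22
                        (Vs k) (Us k) (mus k) i j) ->
  forall k,
    objL X M sigma1 sigma2 b1 c1 q11 q12 b2 c2 q21 q22 (Vs k.+1) (Us k.+1) (mus k.+1)
    <= objL X M sigma1 sigma2 b1 c1 q11 q12 b2 c2 q21 q22 (Vs k) (Us k) (mus k).
Proof.
move=> M_row sigma1_gt0 sigma2_gt0 _ _ adm1 adm2 step W_pos k.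
apply: (step_objL_le M_row sigma1_gt0 sigma2_gt0 adm1 adm2 (step k)).
exact: W_pos.
Qed.
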